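(* Let $\{x_k\}$ be generated by the Subgradient-InexP method with Polyak's stepsize rule, under the standing assumptions, and assume $\{x_k\}$ converges to a point $x_*\in\Omega^*$. Let $c>0$ satisfy $c\ge\|s_k\|$ for all $k=0,1,\dots$. Then for every $N\in\mathbb{N}$, $$\min\{f(x_k)-f^*:\ k=0,1,\dots,N\}\le\frac{c}{\sqrt{\underline\beta(N+1)}}\,\|x_0-x_*\|.$$
   Context: Problem: minimize a convex $f:\mathbb{R}^n\to\mathbb{R}$ over a nonempty closed convex $C\subset\mathbb{R}^n$; $f^*:=\inf_{x\in C}f(x)$, $\Omega^*$ the set of minimizers. For $\epsilon\ge0$, $\partial_\epsilon f(x):=\{s: f(y)\ge f(x)+\langle s,y-x\rangle-\epsilon\ \forall y\}$. Relative error tolerance function: any $\varphi_{\gamma,\theta,\lambda}:(\mathbb{R}^n)^3\to[0,\infty)$ with $\varphi_{\gamma,\theta,\lambda}(u,v,w)\le\gamma\|v-u\|^2+\theta\|w-v\|^2+\lambda\|w-u\|^2$; for $u\in C$, $\mathcal{P}_C(\varphi_{\gamma,\theta,\lambda},u,v):=\{w\in C:\langle v-w,z-w\rangle\le\varphi_{\gamma,\theta,\lambda}(u,v,w)\ \forall z\in C\}$. Subgradient-InexP method: $x_0\in C$; at iteration $k$, if $0\in\partial f(x_k)$ stop; otherwise choose nonzero $s_k\in\partial_{\epsilon_k}f(x_k)$, stepsize $t_k>0$, and $x_{k+1}\in\mathcal{P}_C(\varphi_{\gamma_k,\theta_k,\lambda_k},x_k,x_k-t_ks_k)$. Standing assumptions: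 $\gamma_k\in[0,\bar\gamma)$, $\theta_k\in[0,\bar\theta)$, $\lambda_k\in[0,\bar\lambda)$ with $\bar\gamma\ge0$, $\bar\theta,\bar\lambda\in[0,1/2)$; the sequence is infinite. Let $\nu:=\frac{1+2\bar\gamma}{1-2\bar\lambda}$. Polyak's stepsize rule: $\Omega^*\neq\varnothing$, $f^*>-\infty$ known; $\mu\ge0$, $\underline\beta>0$, $\bar\beta>0$; $\{\epsilon_k\}$ nonincreasing, $0<\underline\beta\le\beta_k\le\bar\beta<\frac{1}{2\mu+\nu}$ and $0<\epsilon_k\le\mu\beta_k[f(x_k)-f^*]$ for all $k$; $t_k:=\beta_k\frac{f(x_k)-f^*}{\|s_k\|^2}$. *)

From HB Require Import structures.
From mathcomp Require Import all_boot all_order all_algebra.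
From mathcomp Require Import all_classical all_reals.
Set Implicit Arguments. Unset Strict Implicit. Unset Printing Implicit Defensive.
Import Order.TTheory GRing.Theory Num.Theory.
Local Open Scope ring_scope.

Section Defs.
Variables (R : realType) (n : nat).
Notation vec := 'rV[R]_n.

Definition dotv (u v : vec) : R := \sum_(i < n) u ord0 i * v ord0 i.
Definition enorm (u : vec) : R := Num.sqrt (dotv u u).

Definition convex_fun (f : vec -> R) : Prop :=
  forall (x y : vec) (t : R), 0 <= t <= 1 ->
    f (t *: x + (1 - t) *: y) <= t * f x + (1 - t) * f y.

Definition convex_set (C : set vec) : Prop :=
  forall (x y : vec) (t : R), C x -> C y -> 0 <= t <= 1 ->
    C (t *: x + (1 - t) *: y).

Definition eps_subgrad (f : vec -> R) (eps : R) (x s : vec) : Prop :=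
  forall y : vec, f x + dotv s (y - x) - eps <= f y.

Definition inexact_proj (C : set vec) (phi : vec -> vec -> vec -> R)
    (u v w : vec) : Prop :=
  C w /\ forall z : vec, C z -> dotv (v - w) (z - w) <= phi u v w.

Definition rel_err_tol (phi : vec -> vec -> vec -> R) (g th l : R) : Prop :=
  forall u v w : vec, 0 <= phi u v w /\
    phi u v w <= g * enorm (v - u) ^+ 2 + th * enorm (w - v) ^+ 2
                 + l * enorm (w - u) ^+ 2.

Definition seq_cvg_to (u : nat -> vec) (l : vec) : Prop :=
  forall e : R, 0 < e -> exists K : nat, forall k : nat, (K <= k)%N ->
    enorm (u k - l) < e.

(* closed set (sequential closedness, equivalent to topological closedness in R^n) *)
Definition closed_set (C : set vec) : Prop :=
  forall (u : nat -> vec) (l : vec), (forall k, C (u k)) -> seq_cvg_to u l -> C l.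

End Defs.

(* Write D_k := ||x_k - x*||^2 and F_k := f(x_k) - f*.  The argument has three
   layers.
   1. Geometry of inexact projections: if w is an inexact projection of v
      relative to u (tolerance phi with parameters gamma, theta, lambda), then
      for every z in C the distance ||w - z|| is controlled by ||u - z||, the
      displacement v - u and its correlation with u - z.
   2. One Polyak step: specialising 1 to v = u - t s with s an
      epsilon-subgradient, z a minimiser and t Polyak's stepsize, one gets the
      Fejer-type decrease  D_{k+1} <= D_k - (beta_low / c^2) F_k^2.
   3. A telescoping argument: a nonnegative sequence decreasing by a * F_k^2
      at every step forces  (N+1) a (min_{k<=N} F_k)^2 <= D_0, which after
      taking square roots is the announced O(1/sqrt(N+1)) bound. *)

From HB Require Import structures.
From mathcomp Require Import all_boot all_order all_algebra.
From mathcomp Require Import all_classical all_reals.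
From mathcomp Require Import ring lra.
Set Implicit Arguments. Unset Strict Implicit. Unset Printing Implicit Defensive.
Import Order.TTheory GRing.Theory Num.Theory.
Local Open Scope ring_scope.

Section InnerProduct.
Variables (R : realType) (n : nat).
Implicit Types u v w : 'rV[R]_n.

Lemma dotvC u v : dotv u v = dotv v u.
Proof. by apply: eq_bigr => i _; rewrite mulrC. Qed.

Lemma dotvDl u v w : dotv (u + v) w = dotv u w + dotv v w.
Proof. by rewrite /dotv -big_split; apply: eq_bigr => i _; rewrite !mxE mulrDl. Qed.

Lemma dotvDr u v w : dotv w (u + v) = dotv w u + dotv w v.
Proof. by rewrite dotvC dotvDl dotvC (dotvC v). Qed.

Lemma dotvNl u v : dotv (- u) v = - dotv u v.
Proof. by rewrite /dotv -sumrN; apply: eq_bigr => i _; rewrite !mxE mulNr. Qed.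

Lemma dotvNr u v : dotv v (- u) = - dotv v u.
Proof. by rewrite dotvC dotvNl dotvC. Qed.

Lemma dotvZl a u v : dotv (a *: u) v = a * dotv u v.
Proof. by rewrite /dotv mulr_sumr; apply: eq_bigr => i _; rewrite !mxE mulrA. Qed.

Lemma dotvZr a u v : dotv v (a *: u) = a * dotv v u.
Proof. by rewrite dotvC dotvZl dotvC. Qed.

Lemma dotv_ge0 u : 0 <= dotv u u.
Proof. by apply: sumr_ge0 => i _; rewrite -expr2 sqr_ge0. Qed.

Lemma enorm_sq u : enorm u ^+ 2 = dotv u u.
Proof. by rewrite sqr_sqrtr // dotv_ge0. Qed.

Lemma enorm_ge0 u : 0 <= enorm u.
Proof. exact: sqrtr_ge0. Qed.

Lemma enorm_sq_gt0 u : u != 0 -> 0 < enorm u ^+ 2.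
Proof.
move=> u_neq0; rewrite enorm_sq lt_def dotv_ge0 andbT.
apply: contra u_neq0 => /eqP sum_sq0; apply/eqP/rowP => i; rewrite mxE.
have sq_ge0 (j : 'I_n) : true -> 0 <= u ord0 j * u ord0 j.
  by rewrite -expr2 sqr_ge0.
have /eqP := psumr_eq0P sq_ge0 sum_sq0 (i := i) isT.
by rewrite mulf_eq0 orbb => /eqP.
Qed.

End InnerProduct.

(* Basic inequality for w in P_C(phi, u, v): it is the variational inequality
   of the exact projection, tested at z and at the anchor u, with the error
   phi absorbed thanks to theta, lambda < 1/2. *)
Lemma inexact_proj_ineq (R : realType) (n : nat) (C : set 'rV[R]_n)
    (phi : 'rV[R]_n -> 'rV[R]_n -> 'rV[R]_n -> R) (g th l : R)
    (u v w z : 'rV[R]_n) :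
  rel_err_tol phi g th l -> 0 <= th < 1/2 -> 0 <= l < 1/2 ->
  C u -> C z -> inexact_proj C phi u v w ->
  (1 - 2 * l) * enorm (w - z) ^+ 2 <=
  (1 - 2 * l) * (enorm (u - z) ^+ 2 + 2 * dotv (v - u) (u - z))
    + (1 + 2 * g) * enorm (v - u) ^+ 2.
Proof.
move=> tolP /andP[th_ge0 th_lt] /andP[l_ge0 l_lt] Cu Cz [_ var_ineq].
have [_ phi_le] := tolP u v w.
have at_z := var_ineq z Cz; have at_u := var_ineq u Cu.
have wv_ge0 := dotv_ge0 (w - v).
have h1 : 0 <= (1 - 2 * l) * (phi u v w - dotv (v - w) (z - w)).
  by apply: mulr_ge0; lra.
have h2 : 0 <= l * (phi u v w - dotv (v - w) (u - w)).
  by apply: mulr_ge0; lra.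
have h3 : 0 <= (1 - 2 * th) * dotv (w - v) (w - v).
  by apply: mulr_ge0; lra.
rewrite !enorm_sq in phi_le *.
rewrite !(dotvDl, dotvDr, dotvNl, dotvNr) in phi_le h1 h2 h3 *.
have := dotvC u v; have := dotvC u w; have := dotvC u z.
have := dotvC v w; have := dotvC v z; have := dotvC w z.
nra.
Qed.

Lemma inexact_step_ineq (R : realType) (n : nat) (C : set 'rV[R]_n)
    (phi : 'rV[R]_n -> 'rV[R]_n -> 'rV[R]_n -> R) (g th l nu t : R)
    (u s w z : 'rV[R]_n) :
  rel_err_tol phi g th l -> 0 <= th < 1/2 -> 0 <= l < 1/2 ->
  1 + 2 * g <= nu * (1 - 2 * l) ->
  C u -> C z -> inexact_proj C phi u (u - t *: s) w ->
  enorm (w - z) ^+ 2 <=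
  enorm (u - z) ^+ 2 - 2 * t * dotv s (u - z) + nu * t ^+ 2 * enorm s ^+ 2.
Proof.
move=> tolP thP lP nu_ge Cu Cz projw.
have l_pos : 0 < 1 - 2 * l by case/andP: lP => _; lra.
have := inexact_proj_ineq tolP thP lP Cu Cz projw.
have -> : u - t *: s - u = - (t *: s) by rewrite addrAC subrr add0r.
rewrite dotvNl dotvZl !enorm_sq dotvNl dotvNr dotvZl dotvZr -!enorm_sq => ineq.
rewrite -(ler_pM2l l_pos).
have ts_ge0 : 0 <= t * (t * enorm s ^+ 2) by rewrite mulrA -expr2 mulr_ge0 ?sqr_ge0.
have := ler_wpM2r ts_ge0 nu_ge; nra.
Qed.

(* Polyak's stepsize t = beta F / ||s||^2 turns the perturbed Fejer inequality
   into a decrease by t F: the cross term is bounded with the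
   epsilon-subgradient inequality <s, u - z> >= F - eps, eps <= mu beta F, and
   the quadratic term uses beta (2 mu + nu) <= 1. *)
Lemma polyak_decrease (R : realType) (D D' F sz S t eps beta mu nu : R) :
  D' <= D - 2 * t * sz + nu * t ^+ 2 * S ->
  F - eps <= sz -> eps <= mu * beta * F -> t * S = beta * F ->
  0 <= t -> 0 <= F -> beta * (2 * mu + nu) <= 1 ->
  D' <= D - t * F.
Proof.
move=> step sz_ge eps_le tS t_ge0 F_ge0 beta_le.
have quad : nu * t ^+ 2 * S = nu * t * (beta * F) by rewrite -tS expr2; ring.
have := ler_wpM2l t_ge0 sz_ge; have := ler_wpM2l t_ge0 eps_le.
have : t * F * (beta * (2 * mu + nu)) <= t * F by rewrite ler_piMr ?mulr_ge0.
nra.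
Qed.

Lemma polyak_gain (R : realType) (F S t beta blow c : R) :
  0 < S -> S <= c ^+ 2 -> t * S = beta * F -> 0 <= t -> blow <= beta -> 0 <= F ->
  blow / c ^+ 2 * F ^+ 2 <= t * F.
Proof.
move=> S_gt0 S_le tS t_ge0 blow_le F_ge0.
have c2_gt0 : 0 < c ^+ 2 by apply: lt_le_trans S_le.
rewrite mulrAC ler_pdivrMr //.
have blowF : blow * F ^+ 2 <= beta * F ^+ 2 by rewrite ler_wpM2r ?sqr_ge0.
have tSF : t * S * F <= t * c ^+ 2 * F by rewrite ler_wpM2r // ler_wpM2l.
rewrite expr2 !mulrA -tS in blowF.
by rewrite expr2 mulrA mulrAC; apply: le_trans tSF.
Qed.

Lemma polyak_iteration_decrease (R : realType) (n : nat)
    (f : 'rV[R]_n -> R) (C : set 'rV[R]_n)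
    (phi : 'rV[R]_n -> 'rV[R]_n -> 'rV[R]_n -> R)
    (g th l nu mu beta blow c eps fstar t : R) (u s w z : 'rV[R]_n) :
  rel_err_tol phi g th l -> 0 <= th < 1/2 -> 0 <= l < 1/2 ->
  1 + 2 * g <= nu * (1 - 2 * l) ->
  C u -> C z -> f z = fstar -> fstar <= f u ->
  s != 0 -> enorm s <= c -> eps_subgrad f eps u s ->
  eps <= mu * beta * (f u - fstar) ->
  blow <= beta -> 0 < blow -> beta * (2 * mu + nu) <= 1 ->
  t = beta * (f u - fstar) / enorm s ^+ 2 ->
  inexact_proj C phi u (u - t *: s) w ->
  enorm (w - z) ^+ 2 <= enorm (u - z) ^+ 2 - blow / c ^+ 2 * (f u - fstar) ^+ 2.
Proof.
move=> tolP thP lP nu_ge Cu Cz fz fz_le s_neq0 s_le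
  subgrad eps_le blow_le blow0 beta_le t_def projw.
have S_gt0 := enorm_sq_gt0 s_neq0.
have F_ge0 : 0 <= f u - fstar by rewrite subr_ge0.
have tS : t * enorm s ^+ 2 = beta * (f u - fstar) by rewrite t_def divfK ?gt_eqF.
have beta_ge0 : 0 <= beta := le_trans (ltW blow0) blow_le.
have t_ge0 : 0 <= t by rewrite t_def; apply: divr_ge0; [exact: mulr_ge0 | exact: ltW].
have S_le : enorm s ^+ 2 <= c ^+ 2.
  by rewrite ler_sqr ?nnegrE ?enorm_ge0 // (le_trans (enorm_ge0 s)).
have sz_ge : f u - fstar - eps <= dotv s (u - z).
  by have := subgrad z; rewrite -fz !dotvDr !dotvNr; lra.
apply: le_trans (_ : _ <= enorm (u - z) ^+ 2 - t * (f u - fstar)) _.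
  apply: polyak_decrease sz_ge eps_le tS t_ge0 F_ge0 beta_le.
  exact: (inexact_step_ineq tolP thP lP nu_ge Cu Cz projw).
by rewrite lerD2l lerN2 (polyak_gain S_gt0 S_le tS t_ge0).
Qed.

Lemma descent_min_sqr (R : realType) (D F : nat -> R) (a : R) (N : nat) :
  0 <= a -> (forall k, 0 <= F k) -> (forall k, 0 <= D k) ->
  (forall k, D k.+1 <= D k - a * F k ^+ 2) ->
  N.+1%:R * a * (\big[Num.min/F 0%N]_(k < N.+1) F k) ^+ 2 <= D 0%N.
Proof.
move=> a_ge0 F_ge0 D_ge0 decr.
set M := \big[Num.min/_]_(k < _) _.
have M_ge0 : 0 <= M by apply: le_bigmin => // k _.
have telescope K : D K + \sum_(k < K) a * F k ^+ 2 <= D 0%N.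
  elim: K => [|K IH]; first by rewrite big_ord0 addr0.
  by rewrite big_ord_recr /=; apply: le_trans IH; have := decr K; lra.
have min_sum : \sum_(k < N.+1) a * M ^+ 2 <= \sum_(k < N.+1) a * F k ^+ 2.
  apply: ler_sum => k _; rewrite ler_wpM2l // ler_sqr ?nnegrE //.
  exact: bigmin_le.
rewrite sumr_const card_ord -mulr_natl mulrA in min_sum.
by apply: le_trans (telescope N.+1); have := D_ge0 N.+1; lra.
Qed.

Lemma le_div_sqrt_of_sqr (R : realType) (M e c b m : R) :
  0 <= M -> 0 <= e -> 0 < c -> 0 < b -> 0 < m ->
  m * (b / c ^+ 2) * M ^+ 2 <= e ^+ 2 -> M <= c / Num.sqrt (b * m) * e.
Proof.
move=> M_ge0 e_ge0 c_gt0 b_gt0 m_gt0 ineq.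
have bm_gt0 : 0 < b * m by rewrite mulr_gt0.
have sqrt_gt0 : 0 < Num.sqrt (b * m) by rewrite sqrtr_gt0.
rewrite mulrAC ler_pdivlMr // -ler_sqr ?nnegrE ?mulr_ge0 ?(ltW c_gt0) ?(ltW sqrt_gt0) //.
rewrite !exprMn (sqr_sqrtr (ltW bm_gt0)).
have -> : M ^+ 2 * (b * m) = c ^+ 2 * (m * (b / c ^+ 2) * M ^+ 2).
  by field; rewrite gt_eqF // exprn_gt0.
by rewrite ler_wpM2l // exprn_ge0 // ltW.
Qed.

Local Open Scope classical_set_scope.

Theorem mainTheorem9 (R : realType) (n : nat)
  (f : 'rV[R]_n -> R) (C : set 'rV[R]_n) (fstar : R) (xstar : 'rV[R]_n)
  (x s : nat -> 'rV[R]_n) (eps t beta gam th lam : nat -> R)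
  (phi : nat -> 'rV[R]_n -> 'rV[R]_n -> 'rV[R]_n -> R)
  (gbar thbar lbar mu blow bbar c : R) :
  (* problem data *)
  convex_fun f ->
  C !=set0 -> closed_set C -> convex_set C ->
  (* fstar = inf_{x in C} f x, and Omega* nonempty *)
  (forall y, C y -> fstar <= f y) ->
  (exists y, C y /\ f y = fstar) ->
  (* parameters of the tolerance functions *)
  0 <= gbar -> 0 <= thbar < 1/2 -> 0 <= lbar < 1/2 ->
  (forall k, 0 <= gam k < gbar) ->
  (forall k, 0 <= th k < thbar) ->
  (forall k, 0 <= lam k < lbar) ->
  (forall k, rel_err_tol (phi k) (gam k) (th k) (lam k)) ->
  (* Polyak's stepsize rule *)
  0 <= mu -> 0 < blow -> 0 < bbar ->
  (forall k, eps k.+1 <= eps k) ->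
  (forall k, blow <= beta k <= bbar) ->
  bbar < 1 / (2 * mu + (1 + 2 * gbar) / (1 - 2 * lbar)) ->
  (forall k, 0 < eps k <= mu * beta k * (f (x k) - fstar)) ->
  (forall k, t k = beta k * (f (x k) - fstar) / enorm (s k) ^+ 2) ->
  (* Subgradient-InexP iterations; the sequence is infinite *)
  C (x 0%N) ->
  (forall k, ~ (eps_subgrad f 0 (x k) 0)) ->
  (forall k, s k != 0 /\ eps_subgrad f (eps k) (x k) (s k)) ->
  (forall k, inexact_proj C (phi k) (x k) (x k - t k *: s k) (x k.+1)) ->
  (* convergence to a solution *)
  C xstar -> f xstar = fstar ->
  seq_cvg_to x xstar ->
  0 < c -> (forall k, enorm (s k) <= c) ->
  forall N : nat,
    \big[Num.min/(f (x 0%N) - fstar)]_(k < N.+1) (f (x k) - fstar)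
      <= c / Num.sqrt (blow * N.+1%:R) * enorm (x 0%N - xstar).
Proof.
move=> _ _ _ _ f_min _ gbar_ge0 thbarP lbarP gamP thP lamP tolP mu_ge0 blow_gt0 _ _
  betaP bbar_lt epsP tP Cx0 _ sP projP Cxstar fxstar _ c_gt0 s_le N.
Local Open Scope ring_scope.
have Cx k : C (x k) by elim: k => // k _; case: (projP k).
set nu := (1 + 2 * gbar) / (1 - 2 * lbar).
have [lbar_pos nu_gt0] : 0 < 1 - 2 * lbar /\ 0 < nu.
  by case/andP: lbarP => ? ?; split; [lra | rewrite divr_gt0 //; lra].
have nu_ge k : 1 + 2 * gam k <= nu * (1 - 2 * lam k).
  have nuE : nu * (1 - 2 * lbar) = 1 + 2 * gbar by rewrite divfK ?lt0r_neq0.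
  have [gam_lt lam_lt] : gam k < gbar /\ lam k < lbar.
    by case/andP: (gamP k) => _ ?; case/andP: (lamP k) => _ ?.
  have : nu * (1 - 2 * lbar) <= nu * (1 - 2 * lam k) by rewrite ler_wpM2l ?ltW //; lra.
  lra.
have beta_nu k : beta k * (2 * mu + nu) <= 1.
  have denom_gt0 : 0 < 2 * mu + nu by lra.
  have := bbar_lt; rewrite -/nu ltr_pdivlMr // => /ltW.
  by apply: le_trans; rewrite ler_wpM2r ?(ltW denom_gt0) //; case/andP: (betaP k).
have decrease k : enorm (x k.+1 - xstar) ^+ 2 <=
    enorm (x k - xstar) ^+ 2 - blow / c ^+ 2 * (f (x k) - fstar) ^+ 2.
  have [s_neq0 subgrad] := sP k.
  have tol_ok (r rbar : R) : 0 <= r < rbar -> 0 <= rbar < 1/2 -> 0 <= r < 1/2.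
    by move=> /andP[? ?] /andP[? ?]; apply/andP; split; lra.
  apply: (polyak_iteration_decrease (tolP k) (tol_ok _ _ (thP k) thbarP)
    (tol_ok _ _ (lamP k) lbarP) (nu_ge k) (Cx k) Cxstar fxstar (f_min _ (Cx k))
    s_neq0 (s_le k) subgrad _ _ blow_gt0 (beta_nu k) (tP k) (projP k)).
  - by case/andP: (epsP k).
  - by case/andP: (betaP k).
apply: le_div_sqrt_of_sqr => //.
- by apply: le_bigmin => [|k _]; rewrite subr_ge0 f_min.
- exact: enorm_ge0.
apply: descent_min_sqr decrease.
- by rewrite divr_ge0 ?exprn_ge0 ?ltW.
- by move=> k; rewrite subr_ge0 f_min.
- by move=> k; rewrite exprn_ge0 // enorm_ge0.
Qed.
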